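(* Let $M$ be a free $\mathbb{T}$-module with a finite $\mathbb{T}$-basis, $V$ its associated complex vector space, and $(\cdot,\cdot)$ a bicomplex scalar product on $M$ which is hyperbolic positive and closed on $V$. Then for all $|\phi\rangle,|\psi\rangle\in M$ and $k=1,2$, $$\langle\phi_{\mathbf{e_k}}|\psi_{\mathbf{e_k}}\rangle=P_k\big(\langle\phi|\psi\rangle\big),$$ where $|\phi_{\mathbf{e_k}}\rangle=P_k(|\phi\rangle)$, $|\psi_{\mathbf{e_k}}\rangle=P_k(|\psi\rangle)$ and $\langle\alpha|\beta\rangle:=(|\alpha\rangle,|\beta\rangle)$.
   Context: Bicomplex numbers: $\mathbb{T}=\{z_1+z_2\mathbf{i_2}: z_1,z_2\in\mathbb{C}(\mathbf{i_1})\}$, $\mathbb{C}(\mathbf{i_1})=\{x+y\mathbf{i_1}: x,y\in\mathbb{R}\}$, $\mathbf{i_1}^2=\mathbf{i_2}^2=-1$, $\mathbf{i_1}\mathbf{i_2}=\mathbf{i_2}\mathbf{i_1}=\mathbf{j}$, $\mathbf{j}^2=1$ (commutative). Hyperbolic numbers $\mathbb{D}=\{x+y\mathbf{j}:x,y\in\mathbb{R}\}$. Idempotents $\mathbf{e_1}=(1+\mathbf{j})/2$, $\mathbf{e_2}=(1-\mathbf{j})/2$. Every $w=z_1+z_2\mathbf{i_2}$ is uniquely $w=(z_1-z_2\mathbf{i_1})\mathbf{e_1}+(z_1+z_2\mathbf{i_1})\mathbf{e_2}$; $P_1(w)=z_1-z_2\mathbf{i_1}$, $P_2(w)=z_1+z_2\mathbf{i_1}$.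 Conjugation: $(z_1+z_2\mathbf{i_2})^{\dagger_3}=\overline{z_1}-\overline{z_2}\mathbf{i_2}$. $\mathbb{D}^+=\{a\mathbf{e_1}+b\mathbf{e_2}: a,b\ge 0\}$. $M$ has $\mathbb{T}$-basis $\{|m_1\rangle,\dots,|m_n\rangle\}$, $V=\{\sum x_l|m_l\rangle: x_l\in\mathbb{C}(\mathbf{i_1})\}$; for $|\phi\rangle=\sum x_l|m_l\rangle$ with $x_l=x_{1l}\mathbf{e_1}+x_{2l}\mathbf{e_2}$, $x_{kl}\in\mathbb{C}(\mathbf{i_1})$, set $P_k(|\phi\rangle)=\sum_l x_{kl}|m_l\rangle\in V$. A bicomplex scalar product is a map $(\cdot,\cdot):M\times M\to\mathbb{T}$, additive in the second argument, with $(|\phi\rangle,\alpha|\psi\rangle)=\alpha(|\phi\rangle,|\psi\rangle)$ for $\alpha\in\mathbb{T}$, $(|\phi\rangle,|\psi\rangle)=(|\psi\rangle,|\phi\rangle)^{\dagger_3}$, $(|\phi\rangle,|\phi\rangle)=0\iff|\phi\rangle=0$; hyperbolic positive: $(|\phi\rangle,|\phi\rangle)\in\mathbb{D}^+$; closed on $V$: $(|\phi\rangle,|\psi\rangle)\in\mathbb{C}(\mathbf{i_1})$ for $|\phi\rangle,|\psi\rangle\in V$. *)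

(* C(i1) is modelled as R[i] (mathcomp-real-closed complex)
   over an arbitrary R : realType (the real numbers). *)
From HB Require Import structures.
From mathcomp Require Import all_boot all_order all_algebra.
From mathcomp Require Import complex.
From mathcomp Require Import reals.
Set Implicit Arguments. Unset Strict Implicit. Unset Printing Implicit Defensive.
Import Order.TTheory GRing.Theory Num.Theory.
Local Open Scope ring_scope.
Local Open Scope complex_scope.

Section Bicomplex.
Variable R : realType.

(* A bicomplex number z1 + z2 i2 with z1, z2 in C(i1) = R[i]. *)
Record bicomplex := BC { bc1 : R[i] ; bc2 : R[i] }.

Definition bc_add (w v : bicomplex) := BC (bc1 w + bc1 v) (bc2 w + bc2 v).
(* (z1 + z2 i2)(w1 + w2 i2) = (z1 w1 - z2 w2) + (z1 w2 + z2 w1) i2 *)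
Definition bc_mul (w v : bicomplex) :=
  BC (bc1 w * bc1 v - bc2 w * bc2 v) (bc1 w * bc2 v + bc2 w * bc1 v).
Definition bc_zero := BC 0 0.
Definition bc_of (z : R[i]) := BC z 0.
Definition bc_dag3 (w : bicomplex) := BC ((bc1 w)^*) (- (bc2 w)^*).
(* idempotents e1 = (1+j)/2, e2 = (1-j)/2, with j = i1 i2 *)
Definition bc_j := BC 0 'i.
Definition bc_e1 := BC (1/2) ('i / 2).
Definition bc_e2 := BC (1/2) (- ('i / 2)).
Definition P1 (w : bicomplex) : R[i] := bc1 w - bc2 w * 'i.
Definition P2 (w : bicomplex) : R[i] := bc1 w + bc2 w * 'i.
Definition Pk (k : bool) (w : bicomplex) : R[i] := if k then P1 w else P2 w.
Definition in_Dplus (w : bicomplex) : Prop :=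
  exists a b : R, 0 <= a /\ 0 <= b /\
    w = bc_add (bc_mul (bc_of a%:C) bc_e1) (bc_mul (bc_of b%:C) bc_e2).

(* M : the free T-module with T-basis |m_1>, ..., |m_n>, represented by
   coordinate vectors; the l-th coordinate is the coefficient of |m_l>. *)
Definition bcmod (n : nat) := 'I_n -> bicomplex.
Definition mod_add n (f g : bcmod n) : bcmod n := fun l => bc_add (f l) (g l).
Definition mod_scale n (a : bicomplex) (f : bcmod n) : bcmod n :=
  fun l => bc_mul a (f l).
Definition mod_zero n : bcmod n := fun _ => bc_zero.
(* V = { sum x_l |m_l> : x_l in C(i1) } *)
Definition in_V n (f : bcmod n) : Prop := forall l, bc2 (f l) = 0.
Definition Pk_mod n (k : bool) (f : bcmod n) : bcmod n :=
  fun l => bc_of (Pk k (f l)).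

Definition bc_scalar_product n (sp : bcmod n -> bcmod n -> bicomplex) : Prop :=
  [/\ (forall phi psi chi, sp phi (mod_add psi chi) = bc_add (sp phi psi) (sp phi chi)),
      (forall phi psi alpha, sp phi (mod_scale alpha psi) = bc_mul alpha (sp phi psi)),
      (forall phi psi, sp phi psi = bc_dag3 (sp psi phi)) &
      (forall phi, sp phi phi = bc_zero <-> phi = @mod_zero n)].

Definition hyperbolic_positive n (sp : bcmod n -> bcmod n -> bicomplex) : Prop :=
  forall phi, in_Dplus (sp phi phi).

Definition closed_on_V n (sp : bcmod n -> bcmod n -> bicomplex) : Prop :=
  forall phi psi, in_V phi -> in_V psi -> bc2 (sp phi psi) = 0.

End Bicomplex.

From HB Require Import structures.
From mathcomp Require Import all_boot all_order all_algebra.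
From mathcomp Require Import complex.
From mathcomp Require Import reals.
From mathcomp Require Import ring.
From Stdlib Require Import FunctionalExtensionality.
Set Implicit Arguments.
Unset Strict Implicit.
Unset Printing Implicit Defensive.
Import GRing.Theory.
Local Open Scope ring_scope.
Local Open Scope complex_scope.

(* Each idempotent projection P_k is a ring morphism from T onto C(i1) that
   turns the conjugation dagger_3 into complex conjugation, sends e_k to 1 and
   the other idempotent to 0.  Splitting |phi> = e1 P_1|phi> + e2 P_2|phi>
   (and likewise |psi>) and expanding the scalar product sesquilinearly, P_k
   therefore kills every term of <phi|psi> except <phi_ek|psi_ek>.  Closedness
   on V makes the latter lie in C(i1), so it equals its own image under P_k. *)

Section Projections.
Variable R : realType.

(* P_k evaluates i2 at Pk_i k, i.e. P_1 at -i1 and P_2 at i1. *)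
Definition Pk_i (k : bool) : R[i] := if k then - 'i else 'i.

Lemma Pk_i_sqr k : Pk_i k * Pk_i k = -1.
Proof. by case: k; rewrite /= ?mulrNN -expr2 sqr_i. Qed.

Lemma conjc_Pk_i k : (Pk_i k)^* = - Pk_i k.
Proof. by case: k; apply/eqP; rewrite eq_complex /= ?opprK oppr0 !eqxx. Qed.

Lemma PkE k (w : bicomplex R) : Pk k w = bc1 w + bc2 w * Pk_i k.
Proof. by case: k; rewrite /= /P1 /P2 ?mulrN. Qed.

Lemma PkD k (w v : bicomplex R) : Pk k (bc_add w v) = Pk k w + Pk k v.
Proof. by rewrite !PkE /=; ring. Qed.

Lemma PkM k (w v : bicomplex R) : Pk k (bc_mul w v) = Pk k w * Pk k v.
Proof.
rewrite !PkE /=; apply/eqP; rewrite -subr_eq0; apply/eqP.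
transitivity (- (bc2 w * bc2 v) * (Pk_i k * Pk_i k + 1)); first ring.
by rewrite Pk_i_sqr addNr mulr0.
Qed.

Lemma Pk_dag3 k (w : bicomplex R) : Pk k (bc_dag3 w) = (Pk k w)^*.
Proof. by rewrite !PkE /= rmorphD rmorphM /= conjc_Pk_i mulrN mulNr. Qed.

Lemma Pk_of k (z : R[i]) : Pk k (bc_of z) = z.
Proof. by rewrite PkE mul0r addr0. Qed.

Lemma mul_i_Pk_i k : 'i * Pk_i k = if k then 1 else -1.
Proof. by case: k; rewrite /= ?mulrN -expr2 sqr_i ?opprK. Qed.

Lemma Pk_e1 k : Pk k (bc_e1 R) = if k then 1 else 0.
Proof. by rewrite PkE /= mulrAC mul_i_Pk_i; case: k; field. Qed.

Lemma Pk_e2 k : Pk k (bc_e2 R) = if k then 0 else 1.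
Proof. by rewrite PkE /= mulNr mulrAC mul_i_Pk_i; case: k; field. Qed.

Lemma bc_dag3D (w v : bicomplex R) :
  bc_dag3 (bc_add w v) = bc_add (bc_dag3 w) (bc_dag3 v).
Proof. by rewrite /bc_dag3 /bc_add /= !rmorphD opprD. Qed.

Lemma bc_dag3M (w v : bicomplex R) :
  bc_dag3 (bc_mul w v) = bc_mul (bc_dag3 w) (bc_dag3 v).
Proof.
by rewrite /bc_dag3 /bc_mul /= rmorphB rmorphD !rmorphM; congr BC; ring.
Qed.

Lemma Pk_inj (w v : bicomplex R) : (forall k, Pk k w = Pk k v) -> w = v.
Proof.
move=> eqPk.
have bc1E (u : bicomplex R) : bc1 u = (P1 u + P2 u) / 2.
  by rewrite /P1 /P2; field.
have bc2E (u : bicomplex R) : bc2 u * 'i = (P2 u - P1 u) / 2.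
  by rewrite /P1 /P2; field.
have neq0_i : ('i : R[i]) != 0 by rewrite eq_complex /= oner_eq0 andbF.
have eqP1 : P1 w = P1 v := eqPk true.
have eqP2 : P2 w = P2 v := eqPk false.
have eq_bc1 : bc1 w = bc1 v by rewrite bc1E [RHS]bc1E eqP1 eqP2.
have eq_bc2 : bc2 w = bc2 v.
  by apply: (mulIf neq0_i); rewrite bc2E [RHS]bc2E eqP1 eqP2.
by case: w v eqPk {eqP1 eqP2} eq_bc1 eq_bc2 => [? ?] [? ?] _ /= -> ->.
Qed.

Lemma bc_idempotent_decomp (w : bicomplex R) :
  w = bc_add (bc_mul (bc_e1 R) (bc_of (P1 w)))
             (bc_mul (bc_e2 R) (bc_of (P2 w))).
Proof.
apply: Pk_inj => k; rewrite PkD !PkM !Pk_of Pk_e1 Pk_e2.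
by case: k => /=; rewrite mul1r mul0r ?addr0 ?add0r.
Qed.

Lemma bc_of_Pk k (w : bicomplex R) : bc2 w = 0 -> bc_of (Pk k w) = w.
Proof. by case: w => w1 w2 /= ->; rewrite PkE mul0r addr0. Qed.

Lemma Pk_mod_decomp n (f : bcmod R n) :
  f = mod_add (mod_scale (bc_e1 R) (Pk_mod true f))
              (mod_scale (bc_e2 R) (Pk_mod false f)).
Proof.
by apply: functional_extensionality => l; exact: bc_idempotent_decomp.
Qed.

End Projections.

Section ScalarProduct.
Variables (R : realType) (n : nat) (sp : bcmod R n -> bcmod R n -> bicomplex R).
Hypothesis sp_addr : forall phi psi chi,
  sp phi (mod_add psi chi) = bc_add (sp phi psi) (sp phi chi).
Hypothesis sp_scaler : forall phi psi alpha,
  sp phi (mod_scale alpha psi) = bc_mul alpha (sp phi psi).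
Hypothesis sp_dag3 : forall phi psi, sp phi psi = bc_dag3 (sp psi phi).

Lemma sp_addl phi psi chi :
  sp (mod_add phi psi) chi = bc_add (sp phi chi) (sp psi chi).
Proof. by rewrite sp_dag3 sp_addr bc_dag3D -!sp_dag3. Qed.

Lemma sp_scalel phi psi alpha :
  sp (mod_scale alpha phi) psi = bc_mul (bc_dag3 alpha) (sp phi psi).
Proof. by rewrite sp_dag3 sp_scaler bc_dag3M -sp_dag3. Qed.

Lemma Pk_sp k phi psi :
  Pk k (sp phi psi) = Pk k (sp (Pk_mod k phi) (Pk_mod k psi)).
Proof.
rewrite {1}(Pk_mod_decomp phi) {1}(Pk_mod_decomp psi).
rewrite !sp_addl !sp_addr !sp_scalel !sp_scaler !PkD !PkM !Pk_dag3 Pk_e1 Pk_e2.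
by case: k; rewrite conjc0 conjc1 !mul0r !mul1r !addr0 ?add0r.
Qed.

End ScalarProduct.

(* k = true stands for k = 1 (e1), k = false for k = 2 (e2). *)
Theorem mainTheorem18 (R : realType) (n : nat)
  (sp : bcmod R n -> bcmod R n -> bicomplex R) :
  bc_scalar_product sp -> hyperbolic_positive sp -> closed_on_V sp ->
  forall (phi psi : bcmod R n) (k : bool),
    sp (Pk_mod k phi) (Pk_mod k psi) = bc_of (Pk k (sp phi psi)).
Proof.
move=> [sp_addr sp_scaler sp_dag3 _] _ sp_closed phi psi k.
by rewrite (Pk_sp sp_addr sp_scaler sp_dag3) bc_of_Pk //; apply: sp_closed.
Qed.
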